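(* Let $k\ge 3$, let $w\in\mathbb{C}^k$ with $w_i\neq 0$ for all $i\in\{1,\ldots,k\}$, and let $a=(a_{ij})\in M_k(\mathbb{C})$ be positive semidefinite with $a_{ij}=w_i\overline{w_j}$ for all $i,j$ with $|i-j|\le 1$. Then $a_{ij}=w_i\overline{w_j}$ for all $i,j\in\{1,\ldots,k\}$. *)

From mathcomp Require Import all_boot all_order all_algebra.
Set Implicit Arguments. Unset Strict Implicit. Unset Printing Implicit Defensive.
Import Order.TTheory GRing.Theory Num.Theory.
Local Open Scope ring_scope.

Definition psdmx (C : numClosedFieldType) (n : nat) (a : 'M[C]_n) : Prop :=
  a^T = map_mx Num.conj a /\
  forall v : 'cV[C]_n, 0 <= ((map_mx Num.conj v)^T *m a *m v) 0 0.

(* For a positive semidefinite hermitian form, an isotropic vector lies in the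
   radical. Whenever the principal 2x2 block of a on rows/columns i, i' is the
   rank-one block of w w^*, the vector e_i / w_i - e_i' / w_i' is isotropic,
   so rows i and i' of a, divided by w_i and w_i', coincide. Chaining this
   along the band makes a_ij / w_i independent of i, and the diagonal gives
   a_jj / w_j = conj w_j. *)

From mathcomp Require Import all_boot all_order all_algebra sesquilinear.
From mathcomp Require Import ring.

Set Implicit Arguments.
Unset Strict Implicit.
Unset Printing Implicit Defensive.

Import Order.TTheory GRing.Theory Num.Theory Num.Def.
Local Open Scope ring_scope.
Local Open Scope sesquilinear_scope.

Lemma ord_adjacent_eq (T : Type) n (f : 'I_n -> T) :
    (forall i j : 'I_n, j = i.+1 :> nat -> f i = f j) ->
  forall i j, f i = f j.
Proof.
move=> f_adj.
have f_up (i : 'I_n) d (lt_id_n : (i + d < n)%N) : f i = f (Ordinal lt_id_n).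
  elim: d lt_id_n => [|d IHd] lt_id_n.
    by congr f; apply: val_inj; rewrite /= addn0.
  have lt_id_n' : (i + d < n)%N by rewrite (leq_trans _ lt_id_n) // addnS.
  by rewrite (IHd lt_id_n'); apply: f_adj; rewrite /= addnS.
have f_le (i j : 'I_n) : (i <= j)%N -> f i = f j.
  move=> le_ij; have lt_id_n : (i + (j - i) < n)%N by rewrite subnKC.
  by rewrite (f_up i _ lt_id_n); congr f; apply: val_inj; rewrite /= subnKC.
by move=> i j; case: (leqP i j) => [/f_le | /ltnW /f_le ->].
Qed.

Section PsdForm.
Variables (C : numClosedFieldType) (n : nat) (M : 'M[C]_n).
Hypotheses (M_herm : M \is (false, conjC : {rmorphism C -> C}).-sesqui)
           (M_psd : forall u, 0 <= form conjC M u u).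

Lemma isotropic_form_eq0 u v : form conjC M u u = 0 -> form conjC M u v = 0.
Proof.
move=> u0; pose c : C := form conjC M u v; pose q : C := form conjC M v v.
have q_ge0 : 0 <= q := M_psd v.
(* the form at this vector is - |c|^2 (q + 2) *)
have := M_psd ((q + 1) *: u - c *: v).
rewrite (formB conjCK M_herm) /= !formZ formZl formZr u0 -/c -/q.
have d_ge0 : 0 <= (q + 1) * (c^* * c).
  by rewrite mulr_ge0 ?addr_ge0 // mulrC mul_conjC_ge0.
rewrite expr0 mul1r mulr0 add0r (geC0_conj d_ge0).
have -> : c * c^* * q - ((q + 1) * (c^* * c) + (q + 1) * (c^* * c))
          = - ((c * c^*) * (q + 2)) by ring.
rewrite oppr_ge0 pmulr_lle0 ?ltr_wpDl // => cc_le0.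
by apply/eqP; rewrite -mul_conjC_eq0 eq_le cc_le0 mul_conjC_ge0.
Qed.

Variable w : 'I_n -> C.

Lemma rank_one_minor_rows_proportional (i i' : 'I_n) :
    w i != 0 -> w i' != 0 ->
    M i i = w i * (w i)^* -> M i' i' = w i' * (w i')^* ->
    M i i' = w i * (w i')^* ->
  forall j, M i j / w i = M i' j / w i'.
Proof.
move=> wi_neq0 wi'_neq0 Mii Mi'i' Mii' j.
pose u : 'rV_n := (w i)^-1 *: 'e_i - (w i')^-1 *: 'e_i'.
have u_isotropic : form conjC M u u = 0.
  rewrite (formB conjCK M_herm) /= !formZ formZl formZr !formee Mii Mi'i' Mii'.
  by rewrite !fmorphV /=; field; rewrite ?conjC_eq0 wi_neq0 wi'_neq0.
have := isotropic_form_eq0 ('e_j) u_isotropic.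
rewrite formDl formNl !formZl !formee => /eqP; rewrite subr_eq0 => /eqP.
by rewrite ![_^-1 * _]mulrC.
Qed.

End PsdForm.

Lemma psdmx_hermitian (C : numClosedFieldType) n (a : 'M[C]_n) :
  psdmx a -> a \is (false, conjC : {rmorphism C -> C}).-sesqui.
Proof.
case=> a_herm _; apply/sesquiP; rewrite expr0 scale1r /= a_herm -map_mx_comp.
by rewrite map_mx_id // => x; exact: conjCK.
Qed.

Lemma psdmx_form_ge0 (C : numClosedFieldType) n (a : 'M[C]_n) :
  psdmx a -> forall u, 0 <= form conjC a u u.
Proof.
case=> _ a_psd u; have := a_psd (u ^t conjC).
by rewrite /form -map_mx_comp map_mx_id ?trmxK // => x; exact: conjCK.
Qed.

Theorem lemma4p12 (C : numClosedFieldType) (k : nat) (hk : (3 <= k)%N)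
  (w : 'I_k -> C) (a : 'M[C]_k)
  (hw : forall i : 'I_k, w i != 0)
  (ha : psdmx a)
  (hband : forall i j : 'I_k, (i <= j.+1)%N -> (j <= i.+1)%N ->
     a i j = w i * Num.conj (w j)) :
  forall i j : 'I_k, a i j = w i * Num.conj (w j).
Proof.
move=> i j.
have col_ratio_const : forall r r' : 'I_k, a r j / w r = a r' j / w r'.
  apply: (@ord_adjacent_eq _ _ (fun r => a r j / w r)) => r r' r'_eq /=.
  apply: (rank_one_minor_rows_proportional (psdmx_hermitian ha)
                                            (psdmx_form_ge0 ha));
    by rewrite ?hw // hband // r'_eq ?ltnSn ?leqW.
have := col_ratio_const i j.
rewrite (hband j j) ?leqnSn // mulrAC divff // mul1r.
by move/(canRL (divfK (hw i))); rewrite mulrC.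
Qed.
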